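(* For every digraph $X$, the Redei–Berge polynomial $u_X(m)$ is a polynomial in $m$ with integer coefficients.
   Context: A digraph $X=(V,E)$: $V$ finite, $E\subset\{(u,v)\in V\times V\mid u\ne v\}$. $\Sigma_V$ is the set of bijections $\sigma:[n]\to V$ ($n=|V|$), $X\mathrm{Des}(\sigma)=\{i\in[n-1]\mid(\sigma_i,\sigma_{i+1})\in E\}$; $F_I=\sum x_{i_1}\cdots x_{i_n}$ over $1\le i_1\le\cdots\le i_n$ with $i_j<i_{j+1}$ for $j\in I$; $U_X=\sum_{\sigma\in\Sigma_V}F_{X\mathrm{Des}(\sigma)}$; $u_X(m)$ is the principal specialization $U_X(1,\dots,1,0,\dots)$ ($m$ ones), a polynomial in $m$ (a priori with rational coefficients). *)

From mathcomp Require Import all_boot all_order all_algebra.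
Set Implicit Arguments. Unset Strict Implicit. Unset Printing Implicit Defensive.

(* Positions [n] = {1..n} are encoded 0-based as 'I_n, and the variable indices
   {1..m} of the principal specialization as 'I_m. *)

(* i is an X-descent of sigma: (sigma_i, sigma_{i+1}) is an arc. *)
Definition XDes (V : finType) (E : rel V) (n : nat) (s : 'I_n -> V) (i j : 'I_n) :=
  E (s i) (s j).

(* g encodes a monomial x_{g 0} ... x_{g (n-1)} of F_I with I = XDes(s):
   weakly increasing indices, strictly increasing at descents. *)
Definition F_term (V : finType) (E : rel V) (n m : nat)
    (s : 'I_n -> V) (g : {ffun 'I_n -> 'I_m}) : bool :=
  [forall i : 'I_n, forall j : 'I_n,
     (val j == (val i).+1) ==>
       (if XDes E s i j then g i < g j else g i <= g j)]%N.

(* u_X(m) = U_X(1,...,1,0,...) (m ones) = sum over bijections sigma : [n] -> V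
   of the number of monomials of F_{XDes(sigma)} in the variables x_1..x_m. *)
Definition u_X (V : finType) (E : rel V) (m : nat) : nat :=
  \sum_(s : {ffun 'I_#|V| -> V} | injectiveb s)
     #|[set g : {ffun 'I_#|V| -> 'I_m} | F_term E s g]|.

From mathcomp Require Import all_boot all_order all_algebra.
From mathcomp Require Import perm.
Import GRing.Theory.
Set Implicit Arguments. Unset Strict Implicit. Unset Printing Implicit Defensive.

(* A term of u_X(m) is an ordering of V together with colours 1..m on the
   positions, weakly increasing and strictly increasing across arcs.
   Splitting off the vertices of the first colour, which form a prefix, gives
   u_W(m+1) = sum_(S <= W) u_S(1) u_(W\S)(m) for the analogous counts on
   vertex subsets W. Hence u_X(m) = sum_f prod_c h(f^-1(c)) over all colourings
   f : V -> [m], with h(S) = u_S(1). In this sum the colour of a fixed vertex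
   v can be permuted freely, so with m+1 colours it equals m+1 times a sum of
   such sums over smaller vertex sets with m colours; by induction on the
   number of vertices it is of the form m q(m-1) with q an integer polynomial. *)

Section BoundedWords.
Variables (X : finType) (n : nat).

(* Words of length at most [n] are stored as [None]-padded functions on ['I_n],
   so that sets of words are finite. *)
Definition pack (w : seq X) : {ffun 'I_n -> option X} :=
  [ffun i : 'I_n => nth None (map Some w) i].
Definition unpack (c : {ffun 'I_n -> option X}) : seq X := pmap id (codom c).

Lemma packK w : size w <= n -> unpack (pack w) = w.
Proof.
move=> le_w_n; rewrite /unpack codomE.
rewrite (eq_map (ffunE _)) (map_comp (nth None (map Some w)) val) val_enum_ord.
rewrite -(subnKC le_w_n) iotaD map_cat -(size_map Some) -/(mkseq _ _) mkseq_nth.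
rewrite pmap_cat (@map_pK _ _ id Some (fun _ => erefl)).
rewrite [in pmap id _](@eq_in_map _ _ _ (fun _ => None) _).1 ?cats0; last first.
  by move=> k; rewrite mem_iota add0n => /andP [+ _]; apply: nth_default.
by rewrite -[RHS]cats0; congr (_ ++ _); elim: (iota _ _) => /=.
Qed.

Definition words (P : pred (seq X)) : {set {ffun 'I_n -> option X}} :=
  [set c | (pack (unpack c) == c) && P (unpack c)].

Lemma pack_words P w : size w <= n -> (pack w \in words P) = P w.
Proof. by move=> le_w_n; rewrite inE packK // eqxx. Qed.

Lemma words_pred P c : c \in words P -> P (unpack c).
Proof. by rewrite inE => /andP []. Qed.

Lemma words_packK P c : c \in words P -> pack (unpack c) = c.
Proof. by rewrite inE => /andP [/eqP]. Qed.

End BoundedWords.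

Lemma card_words_mul (X X1 X2 : finType) (n : nat)
    (P : pred (seq X)) (P1 : pred (seq X1)) (P2 : pred (seq X2))
    (merge : seq X1 -> seq X2 -> seq X) (split1 : seq X -> seq X1) (split2 : seq X -> seq X2) :
  (forall w, P w -> size w <= n) ->
  (forall w1, P1 w1 -> size w1 <= n) -> (forall w2, P2 w2 -> size w2 <= n) ->
  (forall w1 w2, P1 w1 -> P2 w2 ->
     [/\ P (merge w1 w2), split1 (merge w1 w2) = w1 & split2 (merge w1 w2) = w2]) ->
  (forall w, P w -> [/\ P1 (split1 w), P2 (split2 w) & merge (split1 w) (split2 w) = w]) ->
  #|words n P| = #|words n P1| * #|words n P2|.
Proof.
move=> szP szP1 szP2 mergeP splitP; rewrite -cardsX.
pose glue (c : {ffun 'I_n -> option X1} * {ffun 'I_n -> option X2}) :=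
  pack n (merge (unpack c.1) (unpack c.2)).
have -> : words n P = glue @: setX (words n P1) (words n P2).
  apply/setP => c; apply/idP/imsetP => [Pc | [[c1 c2]]].
    have [P1w P2w mergeK] := splitP _ (words_pred Pc).
    exists (pack n (split1 (unpack c)), pack n (split2 (unpack c))).
      by rewrite inE !pack_words ?P1w ?P2w ?szP1 ?szP2.
    by rewrite /glue !packK ?szP1 ?szP2 // mergeK (words_packK Pc).
  rewrite inE => /andP [/= /words_pred P1c /words_pred P2c] ->.
  have [Pm _ _] := mergeP _ _ P1c P2c.
  by rewrite /glue pack_words ?Pm ?szP.
apply: card_in_imset => -[c1 c2] [d1 d2] /setXP [Pc1 Pc2] /setXP [Pd1 Pd2].
rewrite /glue /=; move/(congr1 (@unpack _ n)).
have [Pmc c1K c2K] := mergeP _ _ (words_pred Pc1) (words_pred Pc2).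
have [Pmd d1K d2K] := mergeP _ _ (words_pred Pd1) (words_pred Pd2).
rewrite !packK ?szP // => eq_merge.
have e1 : unpack c1 = unpack d1 by rewrite -c1K eq_merge d1K.
have e2 : unpack c2 = unpack d2 by rewrite -c2K eq_merge d2K.
by rewrite -(words_packK Pc1) -(words_packK Pc2) e1 e2 (words_packK Pd1) (words_packK Pd2).
Qed.

Section SortedSplit.
Variables (T : eqType) (e : rel T) (a : pred T).

Lemma sorted_filter_cat s : transitive e -> (forall x y, e x y -> a y -> a x) ->
  sorted e s -> filter a s ++ filter (predC a) s = s.
Proof.
move=> e_tr a_down; elim: s => //= x s IH x_s.
case: ifP => /= ax; first by rewrite IH ?(path_sorted x_s).
have /allP x_le := order_path_min e_tr x_s.
have /all_filterP -> : all (predC a) s.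
  by apply/allP => y ys /=; apply: contraFN ax; apply: a_down; apply: x_le.
have -> // : filter a s = [::].
apply/eqP; rewrite -[_ == _]negbK -has_filter; apply/hasPn => y ys.
by apply: contraFN ax; apply: a_down; apply: x_le.
Qed.

Lemma sorted_cat_gap s1 s2 : all a s1 -> all (predC a) s2 ->
  (forall x y, a x -> ~~ a y -> e x y) -> sorted e (s1 ++ s2) = sorted e s1 && sorted e s2.
Proof.
case: s1 => [|x s1] // a_s1 na_s2 e_gap.
case: s2 na_s2 => [|y s2] /=; first by rewrite cats0 andbT.
move=> /andP [nay _]; rewrite cat_path /= e_gap //.
by move/allP: a_s1; apply; apply: mem_last.
Qed.

End SortedSplit.

Lemma perm_enum (T : finType) (s : seq T) (A : {set T}) :
  perm_eq s (enum A) = uniq s && ([set x in s] == A).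
Proof.
apply/idP/andP => [s_A | [s_uniq /eqP <-]].
  split; first by rewrite (perm_uniq s_A) enum_uniq.
  by apply/eqP/setP => x; rewrite inE (perm_mem s_A) mem_enum.
by apply: uniq_perm; rewrite ?enum_uniq // => x; rewrite mem_enum inE.
Qed.

Lemma perm_enum_cat (T : finType) (s1 s2 : seq T) (A : {set T}) :
  perm_eq (s1 ++ s2) (enum A) =
  [&& perm_eq s1 (enum [set x in s1]), perm_eq s2 (enum (A :\: [set x in s1]))
    & [set x in s1] \subset A].
Proof.
rewrite !perm_enum eqxx cat_uniq andbT -!andbA; congr (_ && _).
apply/and3P/and3P => [[s12 s2_uniq /eqP A_s12] | [s2_uniq /eqP A_s2 /subsetP s1_A]].
  split => //; last by apply/subsetP => x; rewrite -A_s12 !inE mem_cat => ->.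
  apply/eqP/setP => x; rewrite -A_s12 !inE mem_cat.
  case s2x: (x \in s2); first by move/hasPn: s12 => /(_ x s2x); case: (x \in s1).
  by rewrite orbF andNb.
have s2E x : (x \in s2) = (x \notin s1) && (x \in A) by rewrite -[LHS]in_set A_s2 !inE.
split => //; first by apply/hasPn => x; rewrite s2E => /andP [].
apply/eqP/setP => x; rewrite inE mem_cat s2E.
by case s1x: (x \in s1) => //=; rewrite s1_A ?inE.
Qed.

Lemma sorted_enum_ord (T : Type) (e : rel T) n (f : 'I_n -> T) :
  sorted e [seq f i | i <- enum 'I_n] =
  [forall i : 'I_n, forall j : 'I_n, (val j == (val i).+1) ==> e (f i) (f j)].
Proof.
case: n f => [|n] f; first by rewrite enum_ord0; apply/esym/forallP => -[].
have nth_f (i : 'I_n.+1) : nth (f ord0) [seq f k | k <- enum 'I_n.+1] i = f i.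
  by rewrite (nth_map ord0) ?size_enum_ord // nth_ord_enum.
apply/(sortedP (f ord0))/forallP => [e_f i | e_f k]; rewrite ?size_map -?enumT ?size_enum_ord.
  apply/forallP => j; apply/implyP => /eqP j_succ.
  rewrite -nth_f -[f j]nth_f j_succ; apply: e_f.
  by rewrite -j_succ size_map size_enum_ord ltn_ord.
move=> lt_k1_n; have lt_k_n := ltnW lt_k1_n.
have /forallP/(_ (Ordinal lt_k1_n)) := e_f (Ordinal lt_k_n).
by rewrite eqxx -(nth_f (Ordinal lt_k_n)) -(nth_f (Ordinal lt_k1_n)).
Qed.

Section ColouredWords.
Variables (V : finType) (E : rel V).
Local Notation N := #|V|.

Definition colour_step (p q : V * nat) : bool :=
  if E p.1 q.1 then p.2 < q.2 else p.2 <= q.2.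

Definition nat_colours m (w : seq (V * 'I_m)) : seq (V * nat) := [seq (p.1, val p.2) | p <- w].

(* A compatible word of [W] is an ordering of [W] with a colour per letter, as
   in a monomial of F_XDes, so that [u_on setT] is [u_X]. *)
Definition compatible (W : {set V}) m (w : seq (V * 'I_m)) : bool :=
  perm_eq (map fst w) (enum W) && sorted colour_step (nat_colours w).

Definition u_on (W : {set V}) m : nat := #|words N (@compatible W m)|.

Lemma compatible_size W m (w : seq (V * 'I_m)) : compatible W w -> size w <= N.
Proof. by case/andP => /perm_size; rewrite size_map -cardE => -> _; apply: max_card. Qed.

Lemma u_on_set0 m : u_on set0 m = 1.
Proof.
apply/eqP/cards1P; exists (pack N [::]); apply/setP => c; rewrite in_set1.
apply/idP/eqP => [c_w | ->]; last by rewrite pack_words // /compatible enum_set0.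
have /andP [/perm_size] := words_pred c_w; rewrite enum_set0 size_map.
by move/size0nil => w0; rewrite -(words_packK c_w) w0.
Qed.

Lemma u_on0 W : u_on W 0 = (W == set0).
Proof.
case: eqP => [-> | /eqP W_ne0]; first exact: u_on_set0.
apply/eqP; rewrite cards_eq0 -subset0; apply/subsetP => c.
move=> /words_pred /andP [/perm_size]; rewrite size_map -cardE.
by case: (unpack c) => [/esym/eqP | [_ []]] //; rewrite cards_eq0 (negbTE W_ne0).
Qed.

Definition colour_merge m (w1 : seq (V * 'I_1)) (w2 : seq (V * 'I_m)) : seq (V * 'I_m.+1) :=
  [seq (p.1, ord0) | p <- w1] ++ [seq (p.1, lift ord0 p.2) | p <- w2].

Definition colour_low m (w : seq (V * 'I_m.+1)) : seq (V * 'I_1) :=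
  [seq (p.1, ord0) | p <- w & p.2 == ord0].

Definition colour_high m (w : seq (V * 'I_m.+1)) : seq (V * 'I_m) :=
  pmap (fun p => omap (pair p.1) (unlift ord0 p.2)) w.

Definition low_set m (w : seq (V * 'I_m.+1)) : {set V} := [set x in map fst (colour_low w)].

Lemma sorted_nat_colours_merge m (w1 : seq (V * 'I_1)) (w2 : seq (V * 'I_m)) :
  sorted colour_step (nat_colours (colour_merge w1 w2)) =
  sorted colour_step (nat_colours w1) && sorted colour_step (nat_colours w2).
Proof.
have nat_colours1 : nat_colours [seq (p.1, ord0 : 'I_m.+1) | p <- w1] = nat_colours w1.
  by rewrite /nat_colours -map_comp; apply: eq_map => -[x i]; rewrite [i]ord1.
have nat_colours2 :
    nat_colours [seq (p.1, lift ord0 p.2) | p <- w2] = [seq (p.1, p.2.+1) | p <- nat_colours w2].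
  by rewrite /nat_colours -!map_comp; apply: eq_map => p /=; rewrite /bump add1n.
rewrite /colour_merge /nat_colours map_cat -!/(nat_colours _) nat_colours1 nat_colours2.
rewrite (sorted_cat_gap (a := fun p => p.2 == 0)); first last.
- by move=> [x i] [y j] /= /eqP-> j_ne0; rewrite /colour_step /= lt0n j_ne0; case: ifP.
- by apply/allP => q /mapP [p _ ->].
- by apply/allP => q /mapP [[x i] _ ->]; rewrite /= [i]ord1.
congr (_ && _); case: (nat_colours w2) => //= p s; rewrite path_map; apply: eq_path => q r.
by rewrite /colour_step /= !ltnS.
Qed.

Lemma compatible_merge W m (w1 : seq (V * 'I_1)) (w2 : seq (V * 'I_m)) :
  compatible W (colour_merge w1 w2) =
  [&& compatible [set x in map fst w1] w1, compatible (W :\: [set x in map fst w1]) w2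
    & [set x in map fst w1] \subset W].
Proof.
rewrite /compatible sorted_nat_colours_merge /colour_merge map_cat -!map_comp perm_enum_cat.
by case: (sorted _ (nat_colours w1)); case: (sorted _ (nat_colours w2)); rewrite ?andbT ?andbF.
Qed.

Lemma compatible_vertex_set W m (w : seq (V * 'I_m)) :
  compatible W w -> [set x in map fst w] = W.
Proof. by case/andP; rewrite perm_enum => /andP [_ /eqP]. Qed.

Lemma colour_mergeK m (w1 : seq (V * 'I_1)) (w2 : seq (V * 'I_m)) :
  colour_low (colour_merge w1 w2) = w1 /\ colour_high (colour_merge w1 w2) = w2.
Proof.
split.
  rewrite /colour_low /colour_merge filter_cat !filter_map.
  rewrite (all_filterP _) ?(@eq_filter _ _ pred0) ?filter_pred0 ?cats0.
  - by rewrite -map_comp map_id_in // => -[x i] _; rewrite [i]ord1.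
  - by move=> p; rewrite /= eq_sym (negbTE (neq_lift _ _)).
  - exact/allP.
rewrite /colour_high pmap_cat (_ : pmap _ _ = [::]); last first.
  by elim: w1 => //= p w1; rewrite unlift_none.
by elim: w2 => //= -[x i] w2 IH; rewrite liftK /= IH.
Qed.

Lemma colour_splitK m (w : seq (V * 'I_m.+1)) :
  sorted colour_step (nat_colours w) -> colour_merge (colour_low w) (colour_high w) = w.
Proof.
move=> w_sorted; rewrite /colour_merge /colour_low /colour_high -map_comp.
rewrite (@eq_in_map _ _ _ id _).1 ?map_id; last first.
  by move=> [x i]; rewrite mem_filter /= => /andP [/eqP->].
rewrite (pmap_filter (g := fun q => (q.1, lift ord0 q.2))); last first.
  by move=> [x i] /=; case: (unliftP ord0 i) => [j ->|].
rewrite [X in _ ++ X](@eq_filter _ _ (predC (fun p => p.2 == ord0))); last first.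
  by move=> [x i] /=; case: (unliftP ord0 i) => [j ->|->]; rewrite ?eqxx ?(negbTE (neq_lift _ _)).
(* colours weakly increase, so the letters of colour 0 form a prefix *)
apply: (sorted_filter_cat (e := fun p q => val p.2 <= val q.2)).
- by move=> q p r /= /leq_trans; apply.
- by move=> p q /= + /eqP q0; rewrite q0 leqn0 => p0; apply/eqP/val_inj/eqP.
- move: w_sorted; rewrite sorted_map; apply: sub_sorted => p q.
  by rewrite /relpre /colour_step /=; case: ifP => // _ /ltnW.
Qed.

Lemma compatible_split W m (w : seq (V * 'I_m.+1)) : compatible W w ->
  [/\ compatible (low_set w) (colour_low w), compatible (W :\: low_set w) (colour_high w)
     & low_set w \subset W].
Proof.
move=> w_W; have /andP [_ /colour_splitK w_split] := w_W.
by move: w_W; rewrite -{1}w_split compatible_merge => /and3P.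
Qed.

Lemma u_onS W m :
  u_on W m.+1 = \sum_(S : {set V} | S \subset W) u_on S 1 * u_on (W :\: S) m.
Proof.
rewrite /u_on -sum1_card.
rewrite (partition_big (fun c => low_set (unpack c)) (fun S => S \subset W)) /=;
  last by move=> c /words_pred /compatible_split [].
apply: eq_bigr => S sub_SW; rewrite sum1dep_card.
rewrite (_ : [set _ | _] = words N (fun w => compatible W w && (low_set w == S))); last first.
  by apply/setP => c; rewrite !inE andbA.
apply: (card_words_mul (merge := @colour_merge m)
                       (split1 := @colour_low m) (split2 := @colour_high m)).
- by move=> w /andP [/compatible_size].
- exact: compatible_size.
- exact: compatible_size.
- move=> w1 w2 w1_S w2_WS; have [low_merge high_merge] := colour_mergeK w1 w2.
  rewrite /low_set low_merge high_merge compatible_merge (compatible_vertex_set w1_S).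
  by rewrite w1_S w2_WS sub_SW eqxx.
- move=> w /andP [w_W /eqP <-]; have [w1_S w2_WS _] := compatible_split w_W.
  by split=> //; apply: colour_splitK; case/andP: w_W.
Qed.

Lemma compatible_graph m (s : {ffun 'I_N -> V}) (g : {ffun 'I_N -> 'I_m}) :
  compatible setT [seq (s i, g i) | i <- enum 'I_N] = injectiveb s && F_term E s g.
Proof.
rewrite /compatible perm_enum /nat_colours -!(map_comp _ (fun i => (s i, g i)) (enum 'I_N)).
rewrite sorted_enum_ord; congr (_ && _); rewrite (@eq_map _ _ _ s) //.
apply/idP/idP => [/andP [] // | s_inj]; apply/andP; split=> //.
apply/eqP/setP => x; rewrite inE in_setT.
have := inj_card_onto (injectiveP _ s_inj); rewrite card_ord => /(_ (leqnn _) x).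
by rewrite codomE.
Qed.

Lemma u_X_u_on m : u_X E m = u_on setT m.
Proof.
pose graph (sg : {ffun 'I_N -> V} * {ffun 'I_N -> 'I_m}) : {ffun 'I_N -> option (V * 'I_m)} :=
  [ffun i => Some (sg.1 i, sg.2 i)].
have graph_inj : injective graph.
  move=> [s g] [s' g'] /ffunP eq_sg; congr pair; apply/ffunP => i;
  by have := eq_sg i; rewrite !ffunE => -[].
have unpack_graph sg : unpack (graph sg) = [seq (sg.1 i, sg.2 i) | i <- enum 'I_N].
  rewrite /unpack codomE (eq_map (ffunE _)) (map_comp Some).
  exact: (@map_pK _ _ id Some (fun _ => erefl)).
have packK_graph sg : pack N (unpack (graph sg)) = graph sg.
  apply/ffunP => i; rewrite !ffunE unpack_graph (nth_map (sg.1 i, sg.2 i)).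
    by rewrite (nth_map i) ?nth_ord_enum // size_enum_ord.
  by rewrite size_map size_enum_ord.
rewrite /u_X; under eq_bigr do rewrite -sum1dep_card.
rewrite pair_big_dep sum1dep_card -(card_imset _ graph_inj) /u_on.
apply: eq_card => c; apply/imsetP/idP => [[sg] | c_in].
  by rewrite inE => sg_ok ->; rewrite inE packK_graph eqxx unpack_graph compatible_graph.
have size_c : size (unpack c) = N.
  by have /andP [/perm_size] := words_pred c_in; rewrite size_map -cardE cardsT.
have /fin_all_exists [f c_f] : forall i : 'I_N, exists p : V * 'I_m, c i = Some p.
  move=> i; rewrite -(words_packK c_in) ffunE.
  have := mem_nth None (_ : i < size (map Some (unpack c))).
  rewrite size_map size_c => /(_ (ltn_ord i)).
  by case: nth => [p _|/mapP [] //]; exists p.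
have c_graph : c = graph ([ffun i => (f i).1], [ffun i => (f i).2]).
  by apply/ffunP => i; rewrite !ffunE c_f -surjective_pairing.
exists ([ffun i => (f i).1], [ffun i => (f i).2]) => //.
by move: c_in; rewrite c_graph !inE unpack_graph compatible_graph => /andP [].
Qed.

End ColouredWords.

Section IntPolyFun.
Local Open Scope ring_scope.

Definition int_poly_fun (a : nat -> nat) : Prop :=
  exists p : {poly int}, forall m : nat, (a m)%:Z = p.[m%:Z].

Lemma eq_int_poly_fun (a b : nat -> nat) : a =1 b -> int_poly_fun a -> int_poly_fun b.
Proof. by move=> ab [p ap]; exists p => m; rewrite -ab. Qed.

Lemma int_poly_fun_const k : int_poly_fun (fun=> k).
Proof. by exists k%:Z%:P => m; rewrite hornerC. Qed.

Lemma int_poly_fun_sum (I : finType) (P : pred I) (F : I -> nat -> nat) :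
  (forall i, P i -> int_poly_fun (F i)) -> int_poly_fun (fun m => \sum_(i | P i) F i m).
Proof.
move=> F_poly; have /fin_all_exists [p Fp] : forall i, exists p : {poly int},
    P i -> forall m : nat, (F i m)%:Z = p.[m%:Z].
  by move=> i; case: (boolP (P i)) => [/F_poly [p Fp] | _]; [exists p | exists 0].
exists (\sum_(i | P i) p i) => m; rewrite horner_sum (big_morph Posz PoszD (erefl 0%:Z)).
by apply: eq_bigr => i Pi; rewrite Fp.
Qed.

Lemma int_poly_fun_scale k (a : nat -> nat) : int_poly_fun a -> int_poly_fun (fun m => k * a m)%N.
Proof. by case=> p ap; exists (k%:Z *: p) => m; rewrite hornerZ -ap PoszM. Qed.

Lemma int_poly_fun_succ (a b : nat -> nat) :
  a 0%N = 0%N -> (forall m, a m.+1 = m.+1 * b m)%N -> int_poly_fun b -> int_poly_fun a.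
Proof.
move=> a0 aS [p bp]; exists ('X * (p \Po ('X - 1))) => -[|m]; first by rewrite a0 !hornerE.
rewrite aS hornerM horner_comp !hornerE PoszM bp; congr (_ * p.[_]).
by rewrite -addn1 PoszD addrK.
Qed.

End IntPolyFun.

Section ColouringSums.
Variables (V : finType) (h : {set V} -> nat).

(* A partial colouring [f] with [coloured f = W] is an ordered partition of [W]
   into [m] possibly empty blocks, its colour classes. *)
Definition coloured m (f : {ffun V -> option 'I_m}) : {set V} := [set x | f x != None].

Definition colour_class m (f : {ffun V -> option 'I_m}) (c : 'I_m) : {set V} :=
  [set x | f x == Some c].

Definition colouring_weight m (f : {ffun V -> option 'I_m}) : nat :=
  \prod_(c : 'I_m) h (colour_class f c).

Definition colouring_sum (W : {set V}) m : nat :=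
  \sum_(f : {ffun V -> option 'I_m} | coloured f == W) colouring_weight f.

Lemma colouredP m (f : {ffun V -> option 'I_m}) (W : {set V}) :
  reflect (forall x, (f x != None) = (x \in W)) (coloured f == W).
Proof. by apply: (iffP eqP) => [<- x | f_W]; [rewrite inE | apply/setP => x; rewrite inE f_W]. Qed.

Lemma colouring_sum0 W : colouring_sum W 0 = (W == set0).
Proof.
have f0E (f : {ffun V -> option 'I_0}) : f = [ffun => None].
  by apply/ffunP => x; rewrite ffunE; case: (f x) => [[]|].
have coloured0 (f : {ffun V -> option 'I_0}) : coloured f = set0.
  by apply/setP => x; rewrite [f]f0E !inE ffunE.
rewrite /colouring_sum; case: eqP => [-> | /eqP W_ne0].
  rewrite (big_pred1 [ffun => None]) /colouring_weight ?big_ord0 // => f.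
  by rewrite coloured0 eqxx; apply/esym/eqP/f0E.
by rewrite big_pred0 // => f; rewrite coloured0 eq_sym (negbTE W_ne0).
Qed.

Definition add_first_class m (S : {set V}) (f : {ffun V -> option 'I_m}) :
    {ffun V -> option 'I_m.+1} :=
  [ffun x => if x \in S then Some ord0 else omap (lift ord0) (f x)].

Definition drop_first_class m (f : {ffun V -> option 'I_m.+1}) : {ffun V -> option 'I_m} :=
  [ffun x => obind (unlift ord0) (f x)].

Lemma colouring_weight_add m (S : {set V}) (f : {ffun V -> option 'I_m}) :
  [disjoint S & coloured f] ->
  colouring_weight (add_first_class S f) = h S * colouring_weight f.
Proof.
move=> S_f; rewrite /colouring_weight big_ord_recl; congr (h _ * _).
  apply/setP => x; rewrite !inE ffunE; case: ifP => // _.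
  by case: (f x).
apply: eq_bigr => c _; congr h; apply/setP => x; rewrite !inE ffunE.
case: ifP => [xS | _]; last by case: (f x) => [d|] //=; rewrite (inj_eq (@lift_inj _ _)).
move/pred0P: S_f => /(_ x); rewrite /= xS inE /= => /negbFE/eqP->.
by apply/negbTE; rewrite inj_eq ?neq_lift //; apply: Some_inj.
Qed.

Lemma colouring_sum_first_class m (W S : {set V}) : S \subset W ->
  \sum_(f : {ffun V -> option 'I_m.+1} | (coloured f == W) && (colour_class f ord0 == S))
     colouring_weight f =
  h S * colouring_sum (W :\: S) m.
Proof.
move=> sub_SW; rewrite /colouring_sum big_distrr /=.
rewrite (reindex_onto (add_first_class S) (@drop_first_class m)) /=; last first.
  move=> f /andP [_ /eqP <-]; apply/ffunP => x; rewrite !ffunE inE.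
  by case: (f x) => [c|] //=; case: (unliftP ord0 c) => [j ->|->]; rewrite ?eqxx.
apply: eq_big => [f | f /andP [_ /eqP addK]]; last first.
  apply: colouring_weight_add; apply/pred0P => x; rewrite /= inE; apply/negP => /andP [xS].
  by rewrite -addK !ffunE xS /= unlift_none.
apply/andP/colouredP => [[/andP [/colouredP addW _] /eqP addK] x | f_WS].
  rewrite -addK ffunE; have := addW x; rewrite ffunE in_setD.
  by case: ifP => [xS _ | _] /=; rewrite ?unlift_none //; case: (f x) => //= c; rewrite liftK.
have fS x : x \in S -> f x = None by move=> xS; apply/eqP/negPn; rewrite f_WS inE xS.
split; [apply/andP; split|].
- apply/colouredP => x; rewrite ffunE; case: ifP => [/(subsetP sub_SW) -> // | xS].
  by have := f_WS x; rewrite in_setD xS; case: (f x).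
- apply/eqP/setP => x; rewrite !inE ffunE; case: ifP => // _.
  by case: (f x) => [c|] //=; rewrite eq_sym (negbTE (neq_lift _ _)).
- apply/eqP/ffunP => x; rewrite !ffunE; case: ifP => [xS | _] /=; first by rewrite unlift_none fS.
  by case: (f x) => [c|] //=; rewrite liftK.
Qed.

Lemma colouring_sumS W m :
  colouring_sum W m.+1 = \sum_(S : {set V} | S \subset W) h S * colouring_sum (W :\: S) m.
Proof.
rewrite /colouring_sum (partition_big (fun f : {ffun V -> option 'I_m.+1} => colour_class f ord0)
    (fun S => S \subset W)) /=.
  by apply: eq_bigr => S sub_SW; apply: colouring_sum_first_class.
by move=> f /eqP <-; apply/subsetP => x; rewrite !inE => /eqP ->.
Qed.

Definition swap_colour m (c : 'I_m.+1) (f : {ffun V -> option 'I_m.+1}) :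
    {ffun V -> option 'I_m.+1} :=
  [ffun x => omap (tperm ord0 c) (f x)].

Lemma swap_colourK m (c : 'I_m.+1) : involutive (swap_colour c).
Proof. by move=> f; apply/ffunP => x; rewrite !ffunE; case: (f x) => //= d; rewrite tpermK. Qed.

Lemma colouring_weight_swap m (c : 'I_m.+1) f :
  colouring_weight (swap_colour c f) = colouring_weight f.
Proof.
rewrite /colouring_weight (reindex_inj (@perm_inj _ (tperm ord0 c))).
apply: eq_bigr => d _; congr h; apply/setP => x; rewrite !inE ffunE.
by case: (f x) => //= e; rewrite !(inj_eq (@Some_inj _)) (inj_eq (@perm_inj _ _)).
Qed.

Definition colouring_sum_at (W : {set V}) m (v : V) (c : 'I_m) : nat :=
  \sum_(f : {ffun V -> option 'I_m} | (coloured f == W) && (f v == Some c)) colouring_weight f.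

Lemma colouring_sum_at_swap (W : {set V}) m v (c : 'I_m.+1) :
  colouring_sum_at W v c = colouring_sum_at W v (ord0 : 'I_m.+1).
Proof.
rewrite /colouring_sum_at (reindex_inj (inv_inj (@swap_colourK m c))).
apply: eq_big => f; last by rewrite colouring_weight_swap.
congr (_ && _); first by congr (_ == W); apply/setP => x; rewrite !inE ffunE; case: (f x).
rewrite ffunE; case: (f v) => //= d; rewrite !(inj_eq (@Some_inj _)).
by rewrite -(inj_eq (@perm_inj _ (tperm ord0 c))) tpermK tpermR.
Qed.

Lemma colouring_sum_at0 (W : {set V}) m v :
  colouring_sum_at W v (ord0 : 'I_m.+1) =
  \sum_(S : {set V} | (v \in S) && (S \subset W)) h S * colouring_sum (W :\: S) m.
Proof.
rewrite /colouring_sum_at.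
rewrite (partition_big (fun f => colour_class f ord0) (fun S => (v \in S) && (S \subset W))) /=;
  last by move=> f /andP [/eqP <- fv0]; rewrite inE fv0; apply/subsetP => x; rewrite !inE => /eqP->.
apply: eq_bigr => S /andP [vS sub_SW]; rewrite -colouring_sum_first_class //.
apply: eq_bigl => f; rewrite -andbA; congr (_ && _).
by apply/andP/idP => [[] // | /eqP classS]; rewrite classS; move: vS; rewrite -classS inE.
Qed.

Lemma colouring_sumS_mem (W : {set V}) m v : v \in W ->
  colouring_sum W m.+1 =
  m.+1 * \sum_(S : {set V} | (v \in S) && (S \subset W)) h S * colouring_sum (W :\: S) m.
Proof.
move=> vW; rewrite -colouring_sum_at0.
rewrite (_ : _ * _ = \sum_(c : 'I_m.+1) colouring_sum_at W v (ord0 : 'I_m.+1)); last first.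
  by rewrite sum_nat_const card_ord.
rewrite /colouring_sum.
rewrite (partition_big (fun f : {ffun V -> option 'I_m.+1} => odflt ord0 (f v)) predT) //=.
apply: eq_bigr => c _; rewrite -(colouring_sum_at_swap W v c); apply: eq_bigl => f.
by apply: andb_id2l => /colouredP /(_ v); rewrite vW; case: (f v).
Qed.

Hypothesis h_set0 : h set0 = 1.

Lemma colouring_sum_set0 m : colouring_sum set0 m = 1.
Proof.
elim: m => [|m IHm]; first by rewrite colouring_sum0 eqxx.
rewrite colouring_sumS (big_pred1 set0) => [|S]; last by rewrite subset0.
by rewrite setD0 IHm h_set0.
Qed.

Lemma colouring_sum_poly W : int_poly_fun (colouring_sum W).
Proof.
elim: {W}_.+1 {-2}W (ltnSn #|W|) => // n IHn W; rewrite ltnS => W_le_n.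
have [-> | [v vW]] := set_0Vmem W.
  exact: eq_int_poly_fun (fun m => esym (colouring_sum_set0 m)) (int_poly_fun_const 1).
apply: (int_poly_fun_succ (b := fun m => \sum_(S : {set V} | (v \in S) && (S \subset W))
                                     h S * colouring_sum (W :\: S) m)).
- by rewrite colouring_sum0; case: eqP => // W0; rewrite W0 inE in vW.
- by move=> m; apply: colouring_sumS_mem.
apply: int_poly_fun_sum => S /andP [vS _]; apply: int_poly_fun_scale; apply: IHn.
rewrite (leq_trans _ W_le_n) //; apply: proper_card; apply/properP; split; first exact: subsetDl.
by exists v; rewrite ?inE ?vS.
Qed.

End ColouringSums.

Lemma colouring_sum_unique (V : finType) (a : {set V} -> nat -> nat) :
  (forall W, a W 0 = (W == set0)) ->
  (forall W m, a W m.+1 = \sum_(S : {set V} | S \subset W) a S 1 * a (W :\: S) m) ->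
  forall W m, a W m = colouring_sum (a^~ 1) W m.
Proof.
move=> a0 aS W m; elim: m W => [|m IHm] W; first by rewrite a0 colouring_sum0.
by rewrite aS colouring_sumS; apply: eq_bigr => S _; rewrite IHm.
Qed.

Local Open Scope ring_scope.

Theorem mainTheorem14 (V : finType) (E : rel V) (HE : irreflexive E) :
  exists p : {poly int}, forall m : nat, ((u_X E m)%:Z = p.[m%:Z])%R.
Proof.
have u_X_sum m : u_X E m = colouring_sum (fun S => u_on E S 1) setT m.
  by rewrite u_X_u_on; apply: colouring_sum_unique => [W | W k]; [apply: u_on0 | apply: u_onS].
have [p up] := colouring_sum_poly (h := fun S => u_on E S 1) (u_on_set0 E 1) setT.
by exists p => m; rewrite u_X_sum.
Qed.
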